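(* Let $a\in\mathbf F^{\uparrow}$ with $\mathrm{supp}(a)=(0,r)$, let $\alpha_0\in(0,r)\cap A$, $\alpha_k=(\alpha_0)a^k$ ($k\in\mathbb Z$), and $b\in\mathbf F^{\uparrow}$ with $\mathrm{supp}(b)=(\alpha_0,\alpha_1)$. Let $d\in\mathbf F_{(\alpha_0,\alpha_1)}$ be such that the centralizer of $b$ in $\mathbf F_{(\alpha_0,\alpha_1)}$ equals $\langle d\rangle$. Then the centralizer of the set $\{a^{-k}ba^k\mid k\in\mathbb Z\}$ in $\mathbf F$ is the subgroup generated by $\{a^{-k}da^k\mid k\in\mathbb Z\}$.
   Context: Maps act on the right. Fix real $r>0$, a subgroup $\Lambda\neq\{1\}$ of $\mathbb R^*_+$, and an additive subgroup $A\subseteq\mathbb R$ with $r\in A$ and $\lambda A\subseteq A$ for $\lambda\in\Lambda$. $\mathbf F=\mathbf F(r,\Lambda,A)$ is the group of homeomorphisms $x\colon[0,r)\to[0,r)$ that are piecewise affine with finitely many breakpoints, all slopes in $\Lambda$, and all breakpoints and their images in $A$. $\mathbf F^{\uparrow}=\{x\in\mathbf F\mid(\gamma)x\ge\gamma\ \forall\gamma\}$; $\mathrm{supp}(x)$ is the set of non-fixed points; for $S\subseteq[0,r)$, $\mathbf F_S=\{x\in\mathbf F\mid\mathrm{supp}(x)\subseteq S\}$. *)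

From Stdlib Require Import Reals ZArith ClassicalEpsilon.
Open Scope R_scope.

(* Elements of F(r,Lambda,A) are represented as functions R -> R that are the
   identity outside [0,r).  Maps act on the right: (t)(xy) = ((t)x)y, so the
   product xy is the function composition  fun t => y (x t). *)

Definition inI (r t : R) : Prop := 0 <= t < r.

Definition mult_subgroup_pos (Lambda : R -> Prop) : Prop :=
  (forall l, Lambda l -> 0 < l) /\ Lambda 1 /\
  (forall l m, Lambda l -> Lambda m -> Lambda (l * m)) /\
  (forall l, Lambda l -> Lambda (/ l)) /\
  (exists l, Lambda l /\ l <> 1).

Definition add_subgroup (A : R -> Prop) : Prop :=
  A 0 /\ (forall s t, A s -> A t -> A (s + t)) /\ (forall s, A s -> A (- s)).

Definition cont_on_I (r : R) (f : R -> R) : Prop :=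
  forall t, inI r t -> forall eps, 0 < eps -> exists delta, 0 < delta /\
    forall s, inI r s -> Rabs (s - t) < delta -> Rabs (f s - f t) < eps.

Definition homeo_I (r : R) (x : R -> R) : Prop :=
  (forall t, inI r t -> inI r (x t)) /\
  exists y : R -> R,
    (forall t, inI r t -> inI r (y t)) /\
    (forall t, inI r t -> y (x t) = t) /\
    (forall t, inI r t -> x (y t) = t) /\
    cont_on_I r x /\ cont_on_I r y.

Definition pw_affine (r : R) (Lambda A : R -> Prop) (x : R -> R) : Prop :=
  exists (n : nat) (p : nat -> R),
    p 0%nat = 0 /\ p n = r /\
    forall i, (i < n)%nat ->
      p i < p (S i) /\ A (p i) /\ A (x (p i)) /\
      exists l c, Lambda l /\
        forall t, p i <= t < p (S i) -> x t = l * t + c.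

Definition inF (r : R) (Lambda A : R -> Prop) (x : R -> R) : Prop :=
  (forall t, ~ inI r t -> x t = t) /\ homeo_I r x /\ pw_affine r Lambda A x.

Definition inFup (r : R) (Lambda A : R -> Prop) (x : R -> R) : Prop :=
  inF r Lambda A x /\ forall t, inI r t -> t <= x t.

Definition supp (r : R) (x : R -> R) (t : R) : Prop := inI r t /\ x t <> t.

Definition inF_S (r : R) (Lambda A : R -> Prop) (S : R -> Prop) (x : R -> R) : Prop :=
  inF r Lambda A x /\ forall t, supp r x t -> S t.

(* inverse map (chosen by classical choice; it is the true inverse for bijections) *)
Definition inv (x : R -> R) : R -> R :=
  fun t => epsilon (inhabits 0) (fun s => x s = t).

Definition powZ (x : R -> R) (k : Z) : R -> R :=
  match k with
  | Z0 => fun t => t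
  | Zpos p => Nat.iter (Pos.to_nat p) x
  | Zneg p => Nat.iter (Pos.to_nat p) (inv x)
  end.

(* a^{-k} b a^k in right-action notation: t |-> ((t a^{-k}) b) a^k *)
Definition conjZ (a : R -> R) (k : Z) (b : R -> R) : R -> R :=
  fun t => powZ a k (b (powZ a (- k) t)).

Definition commute (x y : R -> R) : Prop := forall t, x (y t) = y (x t).

Definition fext (x y : R -> R) : Prop := forall t, x t = y t.

Inductive Gen (S : (R -> R) -> Prop) : (R -> R) -> Prop :=
  | gen_base : forall x, S x -> Gen S x
  | gen_one : Gen S (fun t => t)
  | gen_ext : forall x y, Gen S y -> fext x y -> Gen S x
  | gen_mul : forall x y, Gen S x -> Gen S y -> Gen S (fun t => y (x t))
  | gen_inv : forall x y, Gen S x -> (forall t, y (x t) = t) ->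
                (forall t, x (y t) = t) -> Gen S y.

From Stdlib Require Import Reals ZArith Lra Lia List Classical ClassicalEpsilon FunctionalExtensionality.
Open Scope R_scope.

(* Write  b_k = a^{-k} b a^k  and  S_k = (alpha_k, alpha_{k+1}). *)

Ltac destruct_Rabs_lt := repeat match goal with
 | H : Rabs _ < _ |- _ => apply Rabs_def2 in H; destruct H
 end.

Section FGroup.
Variables (r : R) (Lambda A : R -> Prop).
Hypothesis hr : 0 < r.
Hypothesis hLambda : mult_subgroup_pos Lambda.
Hypothesis hA : add_subgroup A.
Hypothesis hLA : forall l t, Lambda l -> A t -> A (l * t).

Local Notation F := (inF r Lambda A).

Lemma Lambda_pos l : Lambda l -> 0 < l.
Proof. destruct hLambda as [H _]; auto. Qed.
Lemma Lambda_mul l m : Lambda l -> Lambda m -> Lambda (l * m).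
Proof. destruct hLambda as [_ [_ [H _]]]; auto. Qed.
Lemma Lambda_inv l : Lambda l -> Lambda (/ l).
Proof. destruct hLambda as [_ [_ [_ [H _]]]]; auto. Qed.
Lemma Lambda_1 : Lambda 1.
Proof. destruct hLambda as [_ [H _]]; auto. Qed.
Lemma A_0 : A 0.
Proof. destruct hA as [H _]; auto. Qed.
Lemma A_add s t : A s -> A t -> A (s + t).
Proof. destruct hA as [_ [H _]]; auto. Qed.
Lemma A_opp s : A s -> A (- s).
Proof. destruct hA as [_ [_ H]]; auto. Qed.

Definition pw_affine_on (u0 v0 : R) (x : R -> R) : Prop :=
  exists (n : nat) (p : nat -> R),
    p 0%nat = u0 /\ p n = v0 /\
    forall i, (i < n)%nat ->
      p i < p (S i) /\ A (p i) /\ A (x (p i)) /\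
      exists l c, Lambda l /\ forall t, p i <= t < p (S i) -> x t = l * t + c.

Lemma pw_affine_on_concat u0 m v0 x :
  pw_affine_on u0 m x -> pw_affine_on m v0 x -> pw_affine_on u0 v0 x.
Proof.
  intros [n1 [p1 [H10 [H1n H1]]]] [n2 [p2 [H20 [H2n H2]]]].
  exists (n1 + n2)%nat, (fun i => if (i <=? n1)%nat then p1 i else p2 (i - n1)%nat).
  split; [|split].
  - simpl. auto.
  - destruct (Nat.leb_spec (n1 + n2) n1).
    + assert (n2 = 0%nat) by lia. subst n2. rewrite Nat.add_0_r. congruence.
    + rewrite <- H2n. f_equal. lia.
  - intros i Hi. destruct (Nat.leb_spec i n1); destruct (Nat.leb_spec (S i) n1).
    + apply H1; lia.
    + assert (i = n1) by lia. subst i.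
      replace (S n1 - n1)%nat with 1%nat by lia. rewrite H1n, <- H20.
      apply (H2 0%nat). lia.
    + lia.
    + replace (S i - n1)%nat with (S (i - n1)) by lia. apply H2. lia.
Qed.

Definition affine_between (L : list R) (u0 v0 : R) (x : R -> R) : Prop :=
  forall u v, u0 <= u /\ u < v /\ v <= v0 -> (forall q, In q L -> ~ (u < q < v)) ->
    exists l c, Lambda l /\ forall s, u <= s < v -> x s = l * s + c.

Lemma breakpoints_pw_affine_on x : forall L u0 v0, u0 < v0 -> A u0 -> A (x u0) ->
  (forall q, In q L -> u0 < q < v0 -> A q /\ A (x q)) ->
  affine_between L u0 v0 x -> pw_affine_on u0 v0 x.
Proof.
  induction L as [|q L IH]; intros u0 v0 Huv Au Axu HL Haff.
  - destruct (Haff u0 v0) as [l [c [Hl Hc]]]; [lra|intros q []|].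
    exists 1%nat, (fun i => match i with O => u0 | _ => v0 end).
    split; [reflexivity|split; [reflexivity|]].
    intros i Hi. assert (i = 0%nat) by lia. subst i.
    repeat split; auto. exists l, c. auto.
  - assert (Hsub : forall u' v', u0 <= u' -> v' <= v0 -> affine_between (q :: L) u0 v0 x ->
              ~ (u' < q < v') -> affine_between L u' v' x).
    { intros u' v' H1 H2 Hq Hnq u v Huv' Hno. apply Hq; [lra|].
      intros q' [<-|Hq'] Hc; [lra|exact (Hno q' Hq' Hc)]. }
    assert (HL' : forall u' v', u0 <= u' -> v' <= v0 ->
              forall q', In q' L -> u' < q' < v' -> A q' /\ A (x q')).
    { intros u' v' H1 H2 q' Hq' Hr. apply HL; [right; auto|lra]. }
    destruct (classic (u0 < q < v0)) as [Hq|Hq].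
    + destruct (HL q (or_introl eq_refl) Hq) as [Aq Axq].
      apply pw_affine_on_concat with q; apply IH; auto; try lra.
      * apply (HL' u0 q); lra.
      * apply Hsub; auto; lra.
      * apply (HL' q v0); lra.
      * apply Hsub; auto; lra.
    + apply IH; auto. apply (HL' u0 v0); lra. apply Hsub; auto; lra.
Qed.

Definition breakpoints (x : R -> R) (L : list R) : Prop :=
  (forall q, In q L -> A q /\ A (x q)) /\ A (x 0) /\ affine_between L 0 r x.

Lemma breakpoints_pw_affine x L : breakpoints x L -> pw_affine r Lambda A x.
Proof.
  intros [HL [H0 Haff]].
  apply (breakpoints_pw_affine_on x L 0 r); auto using A_0.
Qed.

Lemma subdivision_piece (n : nat) (p : nat -> R) :
  p 0%nat = 0 -> p n = r -> (forall i, (i < n)%nat -> p i < p (S i)) ->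
  forall t, 0 <= t < r -> exists i, (i < n)%nat /\ p i <= t < p (S i).
Proof.
  intros H0 Hn Hinc t Ht.
  assert (H : forall m, (m <= n)%nat -> t < p m ->
            exists i, (i < m)%nat /\ p i <= t < p (S i)).
  { induction m; intros Hm Htm; [lra|].
    destruct (Rle_lt_dec (p m) t).
    - exists m. split; [lia|lra].
    - destruct IHm as [i [Hi1 Hi2]]; [lia|auto|]. exists i. split; [lia|auto]. }
  apply (H n); [auto|lra].
Qed.

Lemma subdivision_mono (n : nat) (p : nat -> R) :
  (forall i, (i < n)%nat -> p i < p (S i)) ->
  forall i j, (i <= j <= n)%nat -> p i <= p j.
Proof.
  intros Hinc i j [Hij Hjn]. induction Hij; [lra|].
  assert (p m < p (S m)) by (apply Hinc; lia).
  assert (p i <= p m) by (apply IHHij; lia). lra.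
Qed.

Lemma pw_affine_breakpoints x : pw_affine r Lambda A x -> exists L, breakpoints x L.
Proof.
  intros [n [p [H0 [Hn H]]]].
  assert (Hinc : forall i, (i < n)%nat -> p i < p (S i)) by (intros i Hi; apply H; auto).
  assert (Hnpos : (0 < n)%nat) by (destruct n; [rewrite H0 in Hn; lra|lia]).
  exists (map p (seq 0 n)). split; [|split].
  - intros q Hq. apply in_map_iff in Hq. destruct Hq as [i [<- Hi]]. apply in_seq in Hi.
    destruct (H i) as [_ [? [? _]]]; [lia|auto].
  - rewrite <- H0. apply H. auto.
  - intros u v Huv Hno.
    destruct (subdivision_piece n p H0 Hn Hinc u) as [i [Hi Hpi]]; [lra|].
    assert (v <= p (S i)).
    { destruct (Nat.eq_dec (S i) n) as [E|E].
      - rewrite E, Hn. lra.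
      - destruct (Rle_lt_dec v (p (S i))); auto. exfalso.
        apply (Hno (p (S i))); [apply in_map, in_seq; lia|lra]. }
    destruct (H i Hi) as [_ [_ [_ [l [c [Hl Hc]]]]]].
    exists l, c. split; auto. intros s Hs. apply Hc. lra.
Qed.

Lemma cont_affine_endpoint x u v l c : cont_on_I r x -> 0 <= u -> u < v -> v < r -> 0 < l ->
  (forall s, u <= s < v -> x s = l * s + c) -> x v = l * v + c.
Proof.
  intros Hc Hu Huv Hv Hl Haff.
  destruct (Req_dec (x v) (l * v + c)) as [E|NE]; auto. exfalso.
  set (e := Rabs (x v - (l * v + c))).
  assert (He : 0 < e) by (apply Rabs_pos_lt; lra).
  destruct (Hc v) with (eps := e / 2) as [delta [Hd Hdel]]; [split; lra|lra|].
  set (h := Rmin (delta / 2) (Rmin ((v - u) / 2) (e / (4 * l)))).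
  assert (Hh1 : h <= delta / 2) by apply Rmin_l.
  assert (Hh2 : h <= (v - u) / 2) by (eapply Rle_trans; [apply Rmin_r|apply Rmin_l]).
  assert (Hh3 : h <= e / (4 * l)) by (eapply Rle_trans; [apply Rmin_r|apply Rmin_r]).
  assert (Hh0 : 0 < h).
  { unfold h. apply Rmin_glb_lt; [lra|]. apply Rmin_glb_lt; [lra|].
    apply Rdiv_lt_0_compat; lra. }
  assert (Hlh : l * h <= e / 4).
  { apply Rle_trans with (l * (e / (4 * l))); [apply Rmult_le_compat_l; lra|].
    right. field. lra. }
  assert (Hlh0 : 0 <= l * h) by (apply Rmult_le_pos; lra).
  assert (Hs : x (v - h) = l * (v - h) + c) by (apply Haff; lra).
  assert (Habs : Rabs (x (v - h) - x v) < e / 2).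
  { apply Hdel; [split; lra|]. apply Rabs_def1; lra. }
  rewrite Hs in Habs. destruct_Rabs_lt.
  destruct (Rcase_abs (x v - (l * v + c))).
  - assert (e = - (x v - (l * v + c))) by (unfold e; apply Rabs_left; auto). lra.
  - assert (e = (x v - (l * v + c))) by (unfold e; apply Rabs_right; auto). lra.
Qed.

Lemma affine_bound_endpoint u v l c M : u < v -> 0 < l ->
  (forall s, u <= s < v -> l * s + c <= M) -> l * v + c <= M.
Proof.
  intros Huv Hl H. destruct (Rle_lt_dec (l * v + c) M) as [|Hgt]; auto. exfalso.
  set (e := l * v + c - M).
  set (h := Rmin ((v - u) / 2) (e / (2 * l))).
  assert (Hh2 : h <= (v - u) / 2) by apply Rmin_l.
  assert (Hh3 : h <= e / (2 * l)) by apply Rmin_r.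
  assert (Hh0 : 0 < h).
  { unfold h. apply Rmin_glb_lt; [lra|]. apply Rdiv_lt_0_compat; unfold e; lra. }
  assert (Hlh : l * h <= e / 2).
  { apply Rle_trans with (l * (e / (2 * l))); [apply Rmult_le_compat_l; lra|].
    right. field. lra. }
  assert (l * (v - h) + c <= M) by (apply H; lra).
  unfold e in *. nra.
Qed.

Lemma F_out x t : F x -> ~ inI r t -> x t = t.
Proof. intros [H _]; auto. Qed.
Lemma F_in x t : F x -> inI r t -> inI r (x t).
Proof. intros [_ [[H _] _]]; auto. Qed.
Lemma F_cont x : F x -> cont_on_I r x.
Proof. intros [_ [[_ [y [_ [_ [_ [H _]]]]]] _]]; auto. Qed.
Lemma F_pw x : F x -> pw_affine r Lambda A x.
Proof. intros [_ [_ H]]; auto. Qed.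

(* Positive slopes and continuity make elements of F increasing on [0, r). *)
Lemma F_mono_in x : F x -> forall s t, 0 <= s -> s < t -> t < r -> x s < x t.
Proof.
  intros Hx. destruct (F_pw x Hx) as [n [p [H0 [Hn H]]]].
  assert (Hinc : forall i, (i < n)%nat -> p i < p (S i)) by (intros i Hi; apply H; auto).
  assert (Hpieces : forall i, (i <= n)%nat -> forall s t, 0 <= s -> s < t -> t <= p i ->
             t < r -> x s < x t).
  { induction i; intros Hi s t Hs Hst Hti Htr; [rewrite H0 in Hti; lra|].
    destruct (Rle_lt_dec t (p i)) as [Hle|Hlt]; [apply IHi; auto; lia|].
    destruct (H i) as [_ [_ [_ [l [c [Hl Hc]]]]]]; [lia|].
    assert (Hl0 : 0 < l) by (apply Lambda_pos; auto).
    assert (Hpi0 : 0 <= p i) by (rewrite <- H0; apply (subdivision_mono n p Hinc); lia).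
    assert (Hxt : x t = l * t + c).
    { destruct (Req_dec t (p (S i))) as [E|NE].
      - rewrite E. apply (cont_affine_endpoint x (p i));
          [apply F_cont; auto|lra|apply Hinc; lia|lra|lra|auto].
      - apply Hc; lra. }
    destruct (Rle_lt_dec (p i) s).
    - rewrite Hxt, Hc by lra. nra.
    - assert (x s < x (p i)) by (apply IHi; auto; lia || lra).
      rewrite (Hc (p i)) in H1 by (split; [lra|apply Hinc; lia]). nra. }
  intros s t Hs Hst Htr. apply (Hpieces n); auto. lra.
Qed.

(* Elements of F are strictly increasing on R (they are the identity off [0, r)). *)
Lemma F_mono x : F x -> forall s t, s < t -> x s < x t.
Proof.
  intros Hx s t Hst.
  destruct (classic (inI r s)) as [Is|Ns]; destruct (classic (inI r t)) as [It|Nt].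
  - apply F_mono_in; unfold inI in *; auto; lra.
  - rewrite (F_out x t) by auto. pose proof (F_in x s Hx Is). unfold inI in *. lra.
  - rewrite (F_out x s) by auto. pose proof (F_in x t Hx It). unfold inI in *. lra.
  - rewrite (F_out x t), (F_out x s) by auto. auto.
Qed.

Lemma F_le x : F x -> forall s t, s <= t -> x s <= x t.
Proof. intros Hx s t [H|H]; [left; apply F_mono; auto|subst; lra]. Qed.

Lemma F_inj x : F x -> forall s t, x s = x t -> s = t.
Proof.
  intros Hx s t E. destruct (Rtotal_order s t) as [H|[H|H]]; auto;
  apply (F_mono x Hx) in H; lra.
Qed.

(* An increasing bijection of [0, r) fixes 0. *)
Lemma F_fix0 x : F x -> x 0 = 0.
Proof.
  intros Hx. pose proof Hx as [_ [[Hi [z [Hz [_ [Hxz _]]]]] _]].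
  assert (I0 : inI r 0) by (unfold inI; lra).
  pose proof (Hz 0 I0) as Hz0. pose proof (Hi 0 I0) as Hx0. unfold inI in *.
  destruct (Req_dec (z 0) 0) as [E|NE].
  - rewrite <- E at 1. apply Hxz; lra.
  - assert (x 0 < x (z 0)) by (apply (F_mono x Hx); lra).
    rewrite Hxz in H; lra.
Qed.

Lemma F_pos x t : F x -> 0 < t < r -> 0 < x t < r.
Proof.
  intros Hx Ht. split.
  - rewrite <- (F_fix0 x Hx). apply F_mono; auto; lra.
  - assert (inI r (x t)) by (apply F_in; auto; unfold inI; lra). unfold inI in *; lra.
Qed.

(* Elements of F map A into A: on each piece x t = x(p) + l (t - p). *)
Lemma F_A x s : F x -> A s -> A (x s).
Proof.
  intros Hx As. destruct (classic (inI r s)) as [Is|Ns]; [|rewrite F_out; auto].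
  destruct (F_pw x Hx) as [n [p [H0 [Hn H]]]].
  assert (Hinc : forall i, (i < n)%nat -> p i < p (S i)) by (intros i Hi; apply H; auto).
  destruct (subdivision_piece n p H0 Hn Hinc s Is) as [i [Hi Hs]].
  destruct (H i Hi) as [_ [Api [Axpi [l [c [Hl Hc]]]]]].
  rewrite Hc by auto. rewrite Hc in Axpi by lra.
  replace (l * s + c) with (l * s + ((l * p i + c) + - (l * p i))) by ring.
  apply A_add; auto. apply A_add; auto. apply A_opp; auto.
Qed.

Lemma cont_on_I_id : cont_on_I r (fun t => t).
Proof. intros t It eps He. exists eps. split; auto. Qed.

Lemma cont_on_I_comp f g : cont_on_I r f -> cont_on_I r g ->
  (forall t, inI r t -> inI r (f t)) -> cont_on_I r (fun t => g (f t)).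
Proof.
  intros Hf Hg Hin t It eps He.
  destruct (Hg (f t) (Hin t It) eps He) as [d1 [Hd1 H1]].
  destruct (Hf t It d1 Hd1) as [d [Hd H]].
  exists d. split; auto.
Qed.

Lemma F_id : F (fun t => t).
Proof.
  split; [auto|split].
  - split; auto. exists (fun t => t).
    split; [auto|split; [auto|split; [auto|split; apply cont_on_I_id]]].
  - apply (breakpoints_pw_affine _ nil). split; [intros q []|split; [apply A_0|]].
    intros u v _ _. exists 1, 0. split; [apply Lambda_1|intros; ring].
Qed.

(* The inverse of an element of F is piecewise affine: its breakpoints are the
   images of those of x, and on each piece it is affine with the inverse slope. *)
Lemma inverse_breakpoints x y L : F x -> (forall t, y (x t) = t) -> (forall t, x (y t) = t) ->
  breakpoints x L -> breakpoints y (map x L).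
Proof.
  intros Hx Hyx Hxy [HL [H0 Haff]].
  assert (Hmy : forall s t, s < t -> y s < y t).
  { intros s t Hst. destruct (Rlt_le_dec (y s) (y t)) as [|Hle]; auto.
    apply (F_le x Hx) in Hle. rewrite !Hxy in Hle. lra. }
  assert (Hy0 : y 0 = 0) by (rewrite <- (F_fix0 x Hx) at 1; apply Hyx).
  assert (Hyr : y r = r).
  { rewrite <- (F_out x r Hx) at 1 by (unfold inI; lra). apply Hyx. }
  assert (Hy_le_r : forall v, 0 <= v <= r -> 0 <= y v <= r).
  { intros v [[H1|H1] [H2|H2]]; subst; rewrite ?Hy0, ?Hyr; try lra;
      try pose proof (Hmy _ _ H1); try pose proof (Hmy _ _ H2); lra. }
  split; [|split].
  - intros q Hq. apply in_map_iff in Hq. destruct Hq as [q1 [<- Hq1]].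
    rewrite Hyx. destruct (HL q1 Hq1). auto.
  - rewrite <- (F_fix0 x Hx) at 1. rewrite Hyx. apply A_0.
  - intros u v Huv Hno.
    destruct (Haff (y u) (y v)) as [l [c [Hl Hc]]].
    { pose proof (Hy_le_r u). pose proof (Hy_le_r v). split; [lra|split; [apply Hmy|]]; lra. }
    { intros q Hq Hin. apply (Hno (x q)); [apply in_map; auto|].
      rewrite <- (Hxy u), <- (Hxy v). split; apply F_mono; auto; lra. }
    assert (Hl0 : 0 < l) by (apply Lambda_pos; auto).
    exists (/ l), (- c / l). split; [apply Lambda_inv; auto|].
    intros s Hs.
    assert (Hys : x (y s) = l * y s + c).
    { apply Hc. split; [|apply Hmy; lra].
      destruct Hs as [[Hs|Hs] _]; [left; apply Hmy; auto|subst; lra]. }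
    rewrite Hxy in Hys. rewrite Hys at 2. field. lra.
Qed.

Lemma F_inverse x y : F x -> (forall t, y (x t) = t) -> (forall t, x (y t) = t) -> F y.
Proof.
  intros Hx Hyx Hxy.
  assert (Hyin : forall t, inI r t -> inI r (y t)).
  { intros t It. destruct (classic (inI r (y t))) as [|N]; auto.
    rewrite <- (Hxy t) in It. rewrite (F_out x (y t) Hx N) in It. contradiction. }
  split; [|split].
  - intros t Nt. rewrite <- (F_out x t Hx Nt) at 1. apply Hyx.
  - split; auto. exists x.
    split; [intros; apply F_in; auto|split; [auto|split; [auto|split]]].
    + destruct Hx as [_ [[_ [z [_ [Hzx [_ [_ Hcz]]]]]] _]].
      assert (E : forall w, inI r w -> z w = y w).
      { intros w Iw. rewrite <- (Hxy w) at 1. apply Hzx. auto. }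
      intros t It eps He. destruct (Hcz t It eps He) as [d [Hd H]].
      exists d. split; auto. intros s Is Hs. rewrite <- !E; auto.
    + apply F_cont; auto.
  - destruct (pw_affine_breakpoints x (F_pw x Hx)) as [L HL].
    apply (breakpoints_pw_affine y (map x L)), inverse_breakpoints; auto.
Qed.

(* Every element of F has an inverse in F: extend its inverse on [0, r) by the identity. *)
Lemma F_has_inverse x : F x ->
  exists y, F y /\ (forall t, y (x t) = t) /\ (forall t, x (y t) = t).
Proof.
  intros Hx. pose proof Hx as [Ho [[Hi [z [_ [Hzx [Hxz _]]]]] _]].
  set (y := fun t => if Rle_dec 0 t then if Rlt_dec t r then z t else t else t).
  assert (Hyx : forall t, y (x t) = t).
  { intros t. destruct (classic (inI r t)) as [It|Nt].
    - pose proof (Hi t It) as Ixt. unfold y, inI in *.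
      destruct (Rle_dec 0 (x t)); [|lra]. destruct (Rlt_dec (x t) r); [|lra]. apply Hzx; auto.
    - rewrite (Ho t Nt). unfold y, inI in *.
      destruct (Rle_dec 0 t); auto. destruct (Rlt_dec t r); auto. lra. }
  assert (Hxy : forall t, x (y t) = t).
  { intros t. unfold y. destruct (Rle_dec 0 t); [destruct (Rlt_dec t r)|].
    - apply Hxz. split; auto.
    - apply Ho. unfold inI; lra.
    - apply Ho. unfold inI; lra. }
  exists y. split; auto. apply (F_inverse x); auto.
Qed.

Lemma inv_eq x y : F x -> (forall t, y (x t) = t) -> (forall t, x (y t) = t) -> inv x = y.
Proof.
  intros Hx Hyx Hxy. apply functional_extensionality. intros t. unfold inv.
  assert (E : x (epsilon (inhabits 0) (fun s => x s = t)) = t).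
  { apply epsilon_spec. exists (y t). auto. }
  set (e := epsilon (inhabits 0) (fun s => x s = t)) in *.
  rewrite <- E, Hyx. reflexivity.
Qed.

Lemma composite_breakpoints x x' y Lx Ly : F x -> F y -> (forall t, x' (x t) = t) ->
  (forall t, x (x' t) = t) -> breakpoints x Lx -> breakpoints y Ly ->
  breakpoints (fun t => y (x t)) (Lx ++ map x' Ly).
Proof.
  intros Hx Hy Hx'x Hxx' [HLx [H0x Haffx]] [HLy [H0y Haffy]].
  assert (Hx' : F x') by (apply (F_inverse x); auto).
  split; [|split].
  - intros q Hq. apply in_app_or in Hq. destruct Hq as [Hq|Hq].
    + destruct (HLx q Hq). split; auto. apply F_A; auto.
    + apply in_map_iff in Hq. destruct Hq as [q1 [<- Hq1]].
      rewrite Hxx'. destruct (HLy q1 Hq1). split; auto. apply F_A; auto.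
  - rewrite (F_fix0 x Hx), (F_fix0 y Hy). apply A_0.
  - intros u v Huv Hno.
    destruct (Haffx u v Huv) as [l [c [Hl Hc]]].
    { intros q Hq. apply Hno. apply in_or_app. auto. }
    assert (Hl0 : 0 < l) by (apply Lambda_pos; auto).
    assert (Iu : inI r u) by (unfold inI; lra).
    pose proof (F_in x u Hx Iu) as Ixu. unfold inI in Ixu. rewrite Hc in Ixu by lra.
    assert (Hv : l * v + c <= r).
    { apply (affine_bound_endpoint u); try lra. intros s Hs. rewrite <- Hc by auto.
      assert (inI r (x s)) by (apply F_in; auto; unfold inI; lra). unfold inI in *; lra. }
    destruct (Haffy (l * u + c) (l * v + c)) as [l' [c' [Hl' Hc']]].
    { split; [lra|split; [nra|auto]]. }
    { intros q Hq Hin. set (s := (q - c) / l).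
      assert (Es : l * s + c = q) by (unfold s; field; lra).
      assert (Hs : u < s < v) by (split; nra).
      apply (Hno s); [|auto]. apply in_or_app. right.
      rewrite <- (Hx'x s). apply in_map. rewrite Hc by lra. rewrite Es. auto. }
    exists (l' * l), (l' * c + c'). split; [apply Lambda_mul; auto|].
    intros s Hs. rewrite Hc by auto. rewrite Hc' by (split; nra). ring.
Qed.

Lemma F_comp x y : F x -> F y -> F (fun t => y (x t)).
Proof.
  intros Hx Hy.
  destruct (F_has_inverse x Hx) as [x' [Hx' [Hx'x Hxx']]].
  destruct (F_has_inverse y Hy) as [y' [Hy' [Hy'y Hyy']]].
  split; [|split].
  - intros t Nt. rewrite (F_out x t), (F_out y t); auto.
  - split; [intros t It; apply F_in; auto; apply F_in; auto|].
    exists (fun t => x' (y' t)).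
    split; [intros t It; apply F_in; auto; apply F_in; auto|].
    split; [intros t _; cbv beta; rewrite Hy'y, Hx'x; auto|].
    split; [intros t _; cbv beta; rewrite Hxx', Hyy'; auto|].
    split; apply cont_on_I_comp; try (apply F_cont; auto); intros; apply F_in; auto.
  - destruct (pw_affine_breakpoints x (F_pw x Hx)) as [Lx HLx].
    destruct (pw_affine_breakpoints y (F_pw y Hy)) as [Ly HLy].
    eapply breakpoints_pw_affine, composite_breakpoints; eauto.
Qed.

Section Powers.
Variable a : R -> R.
Hypothesis Fa : F a.

Lemma inv_F_spec : F (inv a) /\ (forall t, inv a (a t) = t) /\ (forall t, a (inv a t) = t).
Proof.
  destruct (F_has_inverse a Fa) as [y [Fy [H1 H2]]].
  rewrite (inv_eq a y); auto.
Qed.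

Lemma powZ_nat n : powZ a (Z.of_nat n) = Nat.iter n a.
Proof. destruct n; [reflexivity|]. simpl. rewrite SuccNat2Pos.id_succ. reflexivity. Qed.

Lemma powZ_opp_nat n : powZ a (- Z.of_nat n) = Nat.iter n (inv a).
Proof. destruct n; [reflexivity|]. simpl. rewrite SuccNat2Pos.id_succ. reflexivity. Qed.

Lemma powZ_succ k t : powZ a (Z.succ k) t = a (powZ a k t).
Proof.
  destruct (Z_le_gt_dec 0 k) as [H|H].
  - replace k with (Z.of_nat (Z.to_nat k)) by lia.
    replace (Z.succ (Z.of_nat (Z.to_nat k))) with (Z.of_nat (S (Z.to_nat k))) by lia.
    rewrite !powZ_nat. reflexivity.
  - destruct (Z.to_nat (- k)) as [|m] eqn:E; [lia|].
    replace k with (- Z.of_nat (S m))%Z by lia.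
    replace (Z.succ (- Z.of_nat (S m))) with (- Z.of_nat m)%Z by lia.
    rewrite !powZ_opp_nat. simpl. destruct inv_F_spec as [_ [_ H2]]. rewrite H2. reflexivity.
Qed.

Lemma powZ_pred k t : powZ a (Z.pred k) t = inv a (powZ a k t).
Proof.
  rewrite <- (Z.succ_pred k) at 2. rewrite powZ_succ.
  destruct inv_F_spec as [_ [H1 _]]. rewrite H1. reflexivity.
Qed.

(* In right-action notation a^(j+k) = a^j a^k, i.e. apply a^j first. *)
Lemma powZ_add j k t : powZ a (j + k) t = powZ a k (powZ a j t).
Proof.
  revert t. induction k using Z.peano_ind; intros t.
  - rewrite Z.add_0_r. reflexivity.
  - rewrite Z.add_succ_r, !powZ_succ, IHk. reflexivity.
  - rewrite Z.add_pred_r, !powZ_pred, IHk. reflexivity.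
Qed.

Lemma powZ_opp_l k t : powZ a (- k) (powZ a k t) = t.
Proof. rewrite <- powZ_add. replace (k + - k)%Z with 0%Z by lia. reflexivity. Qed.

Lemma powZ_opp_r k t : powZ a k (powZ a (- k) t) = t.
Proof. rewrite <- powZ_add. replace (- k + k)%Z with 0%Z by lia. reflexivity. Qed.

Lemma F_powZ k : F (powZ a k).
Proof.
  induction k using Z.peano_ind.
  - exact F_id.
  - replace (powZ a (Z.succ k)) with (fun t => a (powZ a k t)).
    + apply F_comp; auto.
    + apply functional_extensionality; intros; rewrite powZ_succ; auto.
  - replace (powZ a (Z.pred k)) with (fun t => inv a (powZ a k t)).
    + apply F_comp; auto. apply inv_F_spec.
    + apply functional_extensionality; intros; rewrite powZ_pred; auto.
Qed.

Lemma conjZ_conjZ j k f : conjZ a k (conjZ a j f) = conjZ a (j + k) f.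
Proof.
  apply functional_extensionality; intros t. unfold conjZ.
  rewrite powZ_add, <- (powZ_add (- k) (- j)).
  replace (- k + - j)%Z with (- (j + k))%Z by lia. reflexivity.
Qed.

Lemma conjZ_opp_r k f : conjZ a k (conjZ a (- k) f) = f.
Proof. rewrite conjZ_conjZ. replace (- k + k)%Z with 0%Z by lia. reflexivity. Qed.

Lemma conjZ_opp_l k f : conjZ a (- k) (conjZ a k f) = f.
Proof. rewrite conjZ_conjZ. replace (k + - k)%Z with 0%Z by lia. reflexivity. Qed.

Lemma commute_conjZ k f g : commute f g -> commute (conjZ a k f) (conjZ a k g).
Proof. intros H t. unfold conjZ. rewrite !powZ_opp_l, H. reflexivity. Qed.

Lemma F_conjZ k f : F f -> F (conjZ a k f).
Proof.
  intros Hf. unfold conjZ.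
  apply (F_comp (fun t => f (powZ a (- k) t)) (powZ a k));
    [apply F_comp|]; auto; apply F_powZ.
Qed.

Lemma Gen_conjZ k (S T : (R -> R) -> Prop) :
  (forall f, S f -> T (conjZ a k f)) -> forall f, Gen S f -> Gen T (conjZ a k f).
Proof.
  intros HST f Hf. induction Hf as [f Hf| |f g _ IH E|f g _ IHf _ IHg|f g _ IH E1 E2].
  - apply gen_base; auto.
  - replace (conjZ a k (fun t => t)) with (fun t : R => t); [apply gen_one|].
    apply functional_extensionality; intros t. unfold conjZ. rewrite powZ_opp_r. auto.
  - replace f with g; auto. apply functional_extensionality; intros t; symmetry; auto.
  - replace (conjZ a k (fun t => g (f t))) with (fun t => conjZ a k g (conjZ a k f t)).
    + apply gen_mul; auto.
    + apply functional_extensionality; intros t. unfold conjZ. rewrite powZ_opp_l. auto.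
  - apply (gen_inv T (conjZ a k f)); auto; intros t; unfold conjZ;
      rewrite powZ_opp_l, ?E1, ?E2, powZ_opp_r; auto.
Qed.

End Powers.

Definition restr (p q : R) (x : R -> R) (t : R) : R :=
  if Rlt_dec p t then if Rlt_dec t q then x t else t else t.

Lemma restr_in p q x t : p < t < q -> restr p q x t = x t.
Proof.
  intros H. unfold restr. destruct (Rlt_dec p t); [|lra]. destruct (Rlt_dec t q); [auto|lra].
Qed.

Lemma restr_out p q x t : ~ (p < t < q) -> restr p q x t = t.
Proof.
  intros H. unfold restr. destruct (Rlt_dec p t); auto. destruct (Rlt_dec t q); auto.
  exfalso; apply H; auto.
Qed.

Lemma cont_on_I_restr p q x : cont_on_I r x -> x p = p -> x q = q -> p < q ->
  cont_on_I r (restr p q x).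
Proof.
  intros Hc Hp Hq Hpq t It eps He.
  destruct (Hc t It eps He) as [d [Hd H]].
  destruct (classic (p < t < q)) as [Hin|Hout].
  - pose proof (Rmin_l d (Rmin (t - p) (q - t))). pose proof (Rmin_r d (Rmin (t - p) (q - t))).
    pose proof (Rmin_l (t - p) (q - t)). pose proof (Rmin_r (t - p) (q - t)).
    exists (Rmin d (Rmin (t - p) (q - t))). split; [apply Rmin_glb_lt; auto; apply Rmin_glb_lt; lra|].
    intros s Is Hs. assert (p < s < q) by (destruct_Rabs_lt; split; lra).
    rewrite !restr_in by auto. apply H; auto. apply Rabs_def1; destruct_Rabs_lt; lra.
  - rewrite (restr_out p q x t Hout).
    destruct (classic (x t = t)) as [Fix|NFix].
    + exists (Rmin d eps). split; [apply Rmin_glb_lt; auto|].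
      intros s Is Hs. pose proof (Rmin_l d eps). pose proof (Rmin_r d eps).
      destruct (classic (p < s < q)).
      * rewrite restr_in by auto. rewrite <- Fix. apply H; auto.
        apply Rabs_def1; destruct_Rabs_lt; lra.
      * rewrite restr_out by auto. apply Rabs_def1; destruct_Rabs_lt; lra.
    +
      assert (Hne : t < p \/ q < t).
      { destruct (Rtotal_order t p) as [|[E|]]; [auto|subst; tauto|].
        destruct (Rtotal_order t q) as [|[E|]]; [tauto|subst; tauto|auto]. }
      destruct Hne as [Hlt|Hgt].
      * exists (Rmin eps (p - t)). split; [apply Rmin_glb_lt; lra|].
        intros s Is Hs. pose proof (Rmin_l eps (p - t)). pose proof (Rmin_r eps (p - t)).
        destruct_Rabs_lt. rewrite restr_out by lra. apply Rabs_def1; lra.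
      * exists (Rmin eps (t - q)). split; [apply Rmin_glb_lt; lra|].
        intros s Is Hs. pose proof (Rmin_l eps (t - q)). pose proof (Rmin_r eps (t - q)).
        destruct_Rabs_lt. rewrite restr_out by lra. apply Rabs_def1; lra.
Qed.

Lemma restr_breakpoints x p q L : p < q -> A p -> A q -> x p = p -> breakpoints x L ->
  breakpoints (restr p q x) (p :: q :: L).
Proof.
  intros Hpq Ap Aq Hxp [HL [H0 Haff]]. split; [|split].
  - intros q' [<-|[<-|Hq']]; try (rewrite restr_out by lra; auto).
    destruct (HL q' Hq'). split; auto. destruct (classic (p < q' < q)).
    + rewrite restr_in; auto.
    + rewrite restr_out; auto.
  - destruct (classic (p < 0 < q)).
    + rewrite restr_in; auto.
    + rewrite restr_out; auto. apply A_0.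
  - intros u v Huv Hno.
    assert (Hnp : ~ (u < p < v)) by (apply Hno; left; auto).
    assert (Hnq : ~ (u < q < v)) by (apply Hno; right; left; auto).
    destruct (Rlt_le_dec u p) as [Hup|Hpu]; [|destruct (Rlt_le_dec u q) as [Huq|Hqu]].
    + exists 1, 0. split; [apply Lambda_1|]. intros s Hs. rewrite restr_out by lra. ring.
    + destruct (Haff u v Huv) as [l [c [Hl Hc]]].
      { intros q' Hq'. apply Hno. right; right; auto. }
      exists l, c. split; auto. intros s Hs.
      destruct (Req_dec s p) as [E|NE].
      * subst s. rewrite restr_out by lra. rewrite <- Hc; auto.
      * rewrite restr_in by lra. auto.
    + exists 1, 0. split; [apply Lambda_1|]. intros s Hs. rewrite restr_out by lra. ring.
Qed.

Lemma F_restr x p q : F x -> 0 <= p -> p < q -> q < r -> x p = p -> x q = q -> A p -> A q ->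
  F (restr p q x).
Proof.
  intros Hx Hp Hpq Hq Hxp Hxq Ap Aq.
  destruct (F_has_inverse x Hx) as [y [Hy [Hyx Hxy]]].
  assert (Hyp : y p = p) by (rewrite <- Hxp at 1; auto).
  assert (Hyq : y q = q) by (rewrite <- Hxq at 1; auto).
  assert (Hstable : forall z, F z -> z p = p -> z q = q -> forall t, inI r t ->
            inI r (restr p q z t)).
  { intros z Hz Hzp Hzq t It. destruct (classic (p < t < q)).
    - rewrite restr_in by auto. apply F_in; auto.
    - rewrite restr_out; auto. }
  assert (Hcancel : forall z w, F z -> z p = p -> z q = q -> (forall t, w (z t) = t) ->
            forall t, restr p q w (restr p q z t) = t).
  { intros z w Hz Hzp Hzq Hwz t. destruct (classic (p < t < q)) as [H|H].
    - assert (p < z t < q) by (rewrite <- Hzp, <- Hzq; split; apply F_mono; auto; lra).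
      rewrite (restr_in p q z t H), (restr_in p q w (z t)); auto.
    - rewrite (restr_out p q z t H), (restr_out p q w t H). auto. }
  split; [|split].
  - intros t Nt. apply restr_out. unfold inI in Nt. lra.
  - split; [apply Hstable; auto|].
    exists (restr p q y).
    split; [apply Hstable; auto|split; [intros t _; apply Hcancel; auto|]].
    split; [intros t _; apply Hcancel; auto|].
    split; apply cont_on_I_restr; auto; apply F_cont; auto.
  - destruct (pw_affine_breakpoints x (F_pw x Hx)) as [L HL].
    apply (breakpoints_pw_affine _ (p :: q :: L)), restr_breakpoints; auto.
Qed.

Lemma injective_preserves_support f (U : R -> Prop) : (forall s t, f s = f t -> s = t) ->
  (forall t, f t <> t -> U t) -> forall t, U t -> U (f t).
Proof.
  intros Hi Hs t Ut. destruct (classic (U (f t))) as [|N]; auto.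
  assert (f (f t) = f t) by (apply NNPP; intros C; apply N; apply Hs; auto).
  apply Hi in H. rewrite H; auto.
Qed.

Lemma disjoint_supports_commute f g (U V : R -> Prop) :
  (forall s t, f s = f t -> s = t) -> (forall s t, g s = g t -> s = t) ->
  (forall t, f t <> t -> U t) -> (forall t, g t <> t -> V t) ->
  (forall t, U t -> V t -> False) -> commute f g.
Proof.
  intros Hf Hg HU HV Hd t.
  assert (Ff : forall t, ~ U t -> f t = t) by (intros s N; apply NNPP; intros C; auto).
  assert (Fg : forall t, ~ V t -> g t = t) by (intros s N; apply NNPP; intros C; auto).
  destruct (classic (U t)) as [Ut|Nt].
  - pose proof (injective_preserves_support f U Hf HU t Ut) as Uf.
    rewrite (Fg t), (Fg (f t)); auto; intros V'; eapply Hd; eauto.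
  - rewrite (Ff t Nt). destruct (classic (V t)) as [Vt|NVt].
    + pose proof (injective_preserves_support g V Hg HV t Vt) as Vg.
      apply Ff. intros U'; eapply Hd; eauto.
    + rewrite (Fg t NVt). apply Ff; auto.
Qed.

Lemma restr_commute p q x g : commute x g ->
  (forall t, p < t < q -> p < g t < q) -> (forall t, ~ (p < t < q) -> g t = t) ->
  commute (restr p q x) g.
Proof.
  intros Hxg Hin Hout t. destruct (classic (p < t < q)) as [H|H].
  - rewrite (restr_in p q x t H), (restr_in p q x (g t) (Hin t H)). apply Hxg.
  - rewrite (Hout t H), (restr_out p q x t H), Hout; auto.
Qed.

Lemma fixes_common_endpoint p q s x y : p < q < s -> (forall t, x (y t) = t) ->
  (forall u v, u < v -> x u < x v) ->
  (forall t, p < t < q -> p < y t < q) -> (forall t, q < t < s -> q < y t < s) -> x q = q.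
Proof.
  intros Hpqs Hxy Hx Hleft Hright.
  destruct (Rtotal_order (x q) q) as [Hlt|[E|Hgt]]; auto; exfalso.
  - set (t := (Rmax (x q) p + q) / 2).
    pose proof (Rmax_l (x q) p). pose proof (Rmax_r (x q) p).
    assert (Rmax (x q) p < q) by (unfold Rmax; destruct (Rle_dec (x q) p); lra).
    assert (Ht : p < t < q) by (unfold t; split; lra).
    pose proof (Hx _ _ (proj2 (Hleft t Ht))) as Hxt. rewrite Hxy in Hxt. unfold t in Hxt. lra.
  - set (t := (q + Rmin (x q) s) / 2).
    pose proof (Rmin_l (x q) s). pose proof (Rmin_r (x q) s).
    assert (q < Rmin (x q) s) by (unfold Rmin; destruct (Rle_dec (x q) s); lra).
    assert (Ht : q < t < s) by (unfold t; split; lra).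
    pose proof (Hx _ _ (proj1 (Hright t Ht))) as Hxt. rewrite Hxy in Hxt. unfold t in Hxt. lra.
Qed.

Lemma affine_fixing_endpoints u v l c t : u < v -> l * u + c = u -> l * v + c = v ->
  l * t + c = t.
Proof.
  intros Huv Hu Hv. assert (Hl : (l - 1) * (v - u) = 0) by nra.
  apply Rmult_integral in Hl. destruct Hl as [Hl|Hl]; [|lra].
  assert (l = 1) by lra. subst l. lra.
Qed.

Lemma cv_lower_bound u L c : Un_cv u L -> (forall n, c <= u n) -> c <= L.
Proof.
  intros Hu Hc. destruct (Rle_lt_dec c L); auto. exfalso.
  destruct (Hu (c - L)) as [N HN]; [lra|].
  specialize (HN N (le_n N)). unfold R_dist in HN. destruct_Rabs_lt. specialize (Hc N). lra.
Qed.

Lemma cv_upper_bound u L c : Un_cv u L -> (forall n, u n <= c) -> L <= c.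
Proof.
  intros Hu Hc. destruct (Rle_lt_dec L c); auto. exfalso.
  destruct (Hu (L - c)) as [N HN]; [lra|].
  specialize (HN N (le_n N)). unfold R_dist in HN. destruct_Rabs_lt. specialize (Hc N). lra.
Qed.

Lemma cv_shift u L : Un_cv u L -> Un_cv (fun n => u (S n)) L.
Proof.
  intros Hu eps He. destruct (Hu eps He) as [N HN]. exists N. intros n Hn. apply HN. lia.
Qed.

Section Domains.
Variables (a : R -> R) (alpha0 : R).
Hypothesis Fa : F a.
Hypothesis halpha0 : 0 < alpha0 < r.
Hypothesis a_up : forall t, 0 < t < r -> t < a t.

Definition alpha (k : Z) : R := powZ a k alpha0.
Definition dom (k : Z) (t : R) : Prop := alpha k < t < alpha (k + 1).

Lemma alpha_in k : 0 < alpha k < r.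
Proof. apply F_pos; auto. apply F_powZ; auto. Qed.

Lemma alpha_inI k : inI r (alpha k).
Proof. pose proof (alpha_in k). unfold inI; lra. Qed.

Lemma A_alpha k : A alpha0 -> A (alpha k).
Proof. intros H. apply F_A; auto. apply F_powZ; auto. Qed.

Lemma powZ_alpha j k : powZ a k (alpha j) = alpha (j + k).
Proof. unfold alpha. rewrite powZ_add; auto. Qed.

Lemma alpha_succ k : alpha (k + 1) = a (alpha k).
Proof. unfold alpha. apply (powZ_succ a Fa k). Qed.

Lemma alpha_lt_succ k : alpha k < alpha (k + 1).
Proof. rewrite alpha_succ. apply a_up, alpha_in. Qed.

Lemma alpha_mono j k : (j < k)%Z -> alpha j < alpha k.
Proof.
  intros H. replace k with (j + 1 + Z.of_nat (Z.to_nat (k - j - 1)))%Z by lia.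
  induction (Z.to_nat (k - j - 1)) as [|n IH].
  - replace (j + 1 + Z.of_nat 0)%Z with (j + 1)%Z by lia. apply alpha_lt_succ.
  - replace (j + 1 + Z.of_nat (S n))%Z with (j + 1 + Z.of_nat n + 1)%Z by lia.
    pose proof (alpha_lt_succ (j + 1 + Z.of_nat n)). lra.
Qed.

Lemma alpha_le j k : (j <= k)%Z -> alpha j <= alpha k.
Proof. intros H. destruct (Z.eq_dec j k); [subst; lra|left; apply alpha_mono; lia]. Qed.

Lemma domain_unique j k q :
  alpha j <= q < alpha (j + 1) -> alpha k <= q < alpha (k + 1) -> j = k.
Proof.
  intros Hj Hk. destruct (Z.lt_trichotomy j k) as [H|[H|H]]; auto.
  - pose proof (alpha_le (j + 1) k). assert (j + 1 <= k)%Z by lia. intuition lra.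
  - pose proof (alpha_le (k + 1) j). assert (k + 1 <= j)%Z by lia. intuition lra.
Qed.

Lemma dom_disjoint j k t : j <> k -> dom j t -> dom k t -> False.
Proof. unfold dom. intros H Hj Hk. apply H, (domain_unique j k t); lra. Qed.

Lemma conjZ_support j k f : (forall s, f s <> s -> dom j s) ->
  forall t, conjZ a k f t <> t -> dom (j + k) t.
Proof.
  intros Hf t Ht. set (s := powZ a (- k) t).
  assert (Hts : t = powZ a k s) by (unfold s; rewrite powZ_opp_r; auto).
  assert (Hfs : f s <> s).
  { intros E. apply Ht. unfold conjZ. fold s. rewrite E. auto. }
  destruct (Hf s Hfs) as [H1 H2]. unfold dom. rewrite Hts.
  rewrite <- powZ_alpha. replace (j + k + 1)%Z with (j + 1 + k)%Z by lia.
  rewrite <- powZ_alpha. split; apply F_mono; auto; apply F_powZ; auto.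
Qed.

(* A sequence in (0, r) converging in (0, r) whose image under a has the same limit
   would produce a fixed point of a in (0, r). *)
Lemma no_common_limit u L : Un_cv u L -> 0 < L < r -> (forall n, inI r (u n)) ->
  ~ Un_cv (fun n => a (u n)) L.
Proof.
  intros Hu HL Hin Hau.
  assert (Hcont : Un_cv (fun n => a (u n)) (a L)).
  { intros eps He. destruct (F_cont a Fa L ltac:(unfold inI; lra) eps He) as [d [Hd H]].
    destruct (Hu d Hd) as [N HN]. exists N. intros n Hn. apply H; auto. apply HN; auto. }
  pose proof (UL_sequence _ _ _ Hau Hcont). pose proof (a_up L HL). lra.
Qed.

Lemma exists_alpha_below t : 0 < t < r -> exists k, alpha k <= t.
Proof.
  intros Ht. apply NNPP. intros Hn.
  assert (H : forall k, t < alpha k).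
  { intros k. destruct (Rlt_le_dec t (alpha k)); auto. exfalso; apply Hn; eauto. }
  set (u := fun n : nat => alpha (- Z.of_nat n)).
  assert (Hdec : Un_decreasing u) by (intros n; unfold u; apply alpha_le; lia).
  assert (Hlb : has_lb u).
  { exists (- t). intros y [i ->]. unfold opp_seq, u. specialize (H (- Z.of_nat i)%Z). lra. }
  destruct (decreasing_cv u Hdec Hlb) as [L HL].
  assert (t <= L) by (apply (cv_lower_bound u); auto; intros n; left; apply H).
  assert (L <= alpha0) by (apply (cv_upper_bound u); auto; intros n; apply (alpha_le _ 0); lia).
  apply (no_common_limit (fun n => u (S n)) L); [apply cv_shift; auto|lra|intros; apply alpha_inI|].
  replace (fun n => a (u (S n))) with u; auto.
  apply functional_extensionality; intros n. unfold u. rewrite <- alpha_succ. f_equal. lia.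
Qed.

Lemma exists_alpha_above t : 0 < t < r -> exists k, t < alpha k.
Proof.
  intros Ht. apply NNPP. intros Hn.
  assert (H : forall k, alpha k <= t).
  { intros k. destruct (Rlt_le_dec t (alpha k)); auto. exfalso; apply Hn; eauto. }
  set (u := fun n : nat => alpha (Z.of_nat n)).
  assert (Hg : Un_growing u) by (intros n; unfold u; apply alpha_le; lia).
  assert (Hub : has_ub u) by (exists t; intros y [i ->]; apply H).
  destruct (growing_cv u Hg Hub) as [L HL].
  assert (L <= t) by (apply (cv_upper_bound u); auto; intros n; unfold u; apply H).
  assert (alpha0 <= L) by (apply (cv_lower_bound u); auto; intros n; apply (alpha_le 0); lia).
  apply (no_common_limit u L); [auto|lra|intros; apply alpha_inI|].
  replace (fun n => a (u n)) with (fun n => u (S n)); [apply cv_shift; auto|].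
  apply functional_extensionality; intros n. unfold u. rewrite <- alpha_succ. f_equal. lia.
Qed.

Lemma alpha_covering t : 0 < t < r -> exists k, alpha k <= t < alpha (k + 1).
Proof.
  intros Ht. destruct (exists_alpha_below t Ht) as [k1 H1].
  destruct (exists_alpha_above t Ht) as [k2 H2].
  assert (Hk : (k1 < k2)%Z).
  { destruct (Z_lt_ge_dec k1 k2); auto. pose proof (alpha_le k2 k1 ltac:(lia)). lra. }
  assert (Hwalk : forall n k, alpha k <= t -> t < alpha (k + Z.of_nat n) ->
            exists k, alpha k <= t < alpha (k + 1)).
  { induction n; intros k Hk1 Hk2.
    - replace (k + Z.of_nat 0)%Z with k in Hk2 by lia. lra.
    - destruct (Rlt_le_dec t (alpha (k + 1))); [exists k; split; auto|].
      apply (IHn (k + 1)%Z); auto.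
      replace (k + 1 + Z.of_nat n)%Z with (k + Z.of_nat (S n))%Z by lia. auto. }
  apply (Hwalk (Z.to_nat (k2 - k1)) k1); auto.
  replace (k1 + Z.of_nat (Z.to_nat (k2 - k1)))%Z with k2 by lia. auto.
Qed.

Definition piece (x : R -> R) (k : Z) : R -> R := restr (alpha k) (alpha (k + 1)) x.

Definition pieces_product (x : R -> R) (Ks : list Z) : R -> R :=
  fold_right (fun k f => fun t => f (piece x k t)) (fun t => t) Ks.

Lemma pieces_product_out x Ks t : (forall k, In k Ks -> ~ dom k t) ->
  pieces_product x Ks t = t.
Proof.
  induction Ks as [|k Ks IH]; intros H; simpl; auto.
  unfold piece. rewrite restr_out by (apply H; left; auto).
  apply IH. intros k' Hk'. apply H. right; auto.
Qed.

Lemma pieces_product_in x Ks k t : (forall k t, dom k t -> dom k (x t)) -> NoDup Ks ->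
  In k Ks -> dom k t -> pieces_product x Ks t = x t.
Proof.
  intros Hp. induction Ks as [|k0 Ks IH]; intros Hnd Hin Ht; simpl; [destruct Hin|].
  inversion Hnd as [|? ? Hk0 Hnd']; subst. destruct Hin as [E|Hin]; [subst k0|].
  - unfold piece. rewrite restr_in by apply Ht. apply pieces_product_out.
    intros k' Hk' Hs. apply (dom_disjoint k k' (x t)); auto. intros <-; contradiction.
  - unfold piece. rewrite restr_out by (intros Hs; apply (dom_disjoint k0 k t); auto;
      intros <-; contradiction).
    apply IH; auto.
Qed.

Lemma Gen_pieces_product x (T : (R -> R) -> Prop) Ks :
  (forall k, In k Ks -> Gen T (piece x k)) -> Gen T (pieces_product x Ks).
Proof.
  induction Ks as [|k Ks IH]; intros H; simpl; [apply gen_one|].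
  apply (gen_mul T (piece x k) (pieces_product x Ks)); [apply H; left; auto|].
  apply IH. intros; apply H; right; auto.
Qed.

Lemma domains_of_list (L : list R) : exists Ks : list Z,
  forall q, In q L -> 0 < q < r -> exists k, In k Ks /\ alpha k <= q < alpha (k + 1).
Proof.
  induction L as [|q L [Ks HKs]]; [exists nil; intros q []|].
  destruct (classic (0 < q < r)) as [Hq|Hq].
  - destruct (alpha_covering q Hq) as [k Hk]. exists (k :: Ks).
    intros q' [<-|Hq'] Hr; [exists k; split; [left|]; auto|].
    destruct (HKs q' Hq' Hr) as [k' [Hk' Hk'2]]. exists k'. split; [right|]; auto.
  - exists Ks. intros q' [<-|Hq'] Hr; [contradiction|auto].
Qed.

(* An element of F fixing every alpha_k is the identity on all but finitely many S_k:
   on a domain containing no breakpoint it is affine and fixes both ends. *)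
Lemma finitely_many_pieces x : F x -> (forall k, x (alpha k) = alpha k) ->
  exists Ks, forall k, ~ In k Ks -> forall t, dom k t -> x t = t.
Proof.
  intros Fx Hfix. destruct (pw_affine_breakpoints x (F_pw x Fx)) as [L [_ [_ Haff]]].
  destruct (domains_of_list L) as [Ks HKs]. exists Ks. intros k Nk t Ht.
  pose proof (alpha_lt_succ k). pose proof (alpha_in k). pose proof (alpha_in (k + 1)).
  destruct (Haff (alpha k) (alpha (k + 1))) as [l [c [Hl Hc]]]; [split; [lra|split; lra]|..].
  { intros q Hq Hin. destruct (HKs q Hq) as [k' [Hk' Hk'2]]; [lra|].
    assert (k' = k) by (apply (domain_unique k' k q); auto; lra). subst k'. contradiction. }
  assert (E1 : x (alpha k) = l * alpha k + c) by (apply Hc; lra).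
  assert (E2 : x (alpha (k + 1)) = l * alpha (k + 1) + c).
  { apply (cont_affine_endpoint x (alpha k)); auto; try lra.
    - apply F_cont; auto.
    - apply Lambda_pos; auto. }
  rewrite Hfix in E1, E2. unfold dom in Ht. rewrite Hc by lra.
  apply (affine_fixing_endpoints (alpha k) (alpha (k + 1))); auto.
Qed.

Section Centralizer.
Variables b d : R -> R.
Hypothesis Fb : F b.
Hypothesis supp_b : forall t, b t <> t <-> dom 0 t.
Hypothesis A_alpha0 : A alpha0.
Hypothesis centralizer_b : forall x,
  (F x /\ (forall t, x t <> t -> dom 0 t) /\ commute x b) <-> Gen (fun y => fext y d) x.

Lemma d_in_centralizer : F d /\ (forall t, d t <> t -> dom 0 t) /\ commute d b.
Proof. apply centralizer_b, gen_base. intros t; auto. Qed.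

Lemma conj_b_support k t : conjZ a k b t <> t <-> dom k t.
Proof.
  split.
  - intros H. rewrite <- (Z.add_0_l k). apply (conjZ_support 0 k b); auto.
    intros s Hs; apply supp_b; auto.
  - intros H E. set (s := powZ a (- k) t).
    assert (Hs : dom 0 s).
    { unfold dom in *. unfold s.
      replace (alpha 0) with (powZ a (- k) (alpha k)) by (rewrite powZ_alpha; f_equal; lia).
      replace (alpha (0 + 1)) with (powZ a (- k) (alpha (k + 1)))
        by (rewrite powZ_alpha; f_equal; lia).
      split; apply F_mono; try apply F_powZ; auto; lra. }
    apply supp_b in Hs. apply Hs. unfold conjZ in E. fold s in E.
    apply (F_inj (powZ a k)); [apply F_powZ; auto|]. rewrite E. unfold s.
    rewrite powZ_opp_r; auto.
Qed.

Lemma conj_b_out k t : ~ dom k t -> conjZ a k b t = t.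
Proof. intros N. apply NNPP. intros C. apply N, conj_b_support; auto. Qed.

Lemma commuting_preserves_dom f : F f -> (forall k, commute f (conjZ a k b)) ->
  forall k t, dom k t -> dom k (f t).
Proof.
  intros Ff Hcf k t Ht. apply NNPP. intros N.
  apply (conj_b_support k t); auto. apply (F_inj f Ff).
  rewrite Hcf, (conj_b_out k (f t) N). auto.
Qed.

Lemma commuting_fixes_alpha x : F x -> (forall k, commute x (conjZ a k b)) ->
  forall k, x (alpha k) = alpha k.
Proof.
  intros Fx Hc k.
  destruct (F_has_inverse x Fx) as [y [Fy [Hyx Hxy]]].
  assert (Hcy : forall k, commute y (conjZ a k b)).
  { intros j t. apply (F_inj x Fx). rewrite Hxy, (Hc j), Hxy. auto. }
  pose proof (alpha_lt_succ (k - 1)). pose proof (alpha_lt_succ k).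
  replace (k - 1 + 1)%Z with k in * by lia.
  apply (fixes_common_endpoint (alpha (k - 1)) (alpha k) (alpha (k + 1)) x y);
    [lra|auto|apply F_mono; auto|..]; intros t Ht.
  - pose proof (commuting_preserves_dom y Fy Hcy (k - 1) t) as Hdom.
    unfold dom in Hdom. replace (k - 1 + 1)%Z with k in Hdom by lia. auto.
  - apply (commuting_preserves_dom y Fy Hcy k t Ht).
Qed.

(* The piece of x on S_k lies in <a^{-k} d a^k>: conjugated back to S_0 it commutes
   with b and is supported in S_0, hence lies in <d>. *)
Lemma piece_in_Gen x k : F x -> (forall j, commute x (conjZ a j b)) ->
  Gen (fun y => exists k : Z, fext y (conjZ a k d)) (piece x k).
Proof.
  intros Fx Hc. pose proof (commuting_fixes_alpha x Fx Hc) as Hfix.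
  pose proof (alpha_lt_succ k). pose proof (alpha_in k). pose proof (alpha_in (k + 1)).
  assert (Fpiece : F (piece x k)) by (apply F_restr; auto; try lra; apply A_alpha; auto).
  assert (Hcomm : commute (piece x k) (conjZ a k b)).
  { apply restr_commute; auto.
    - intros t Ht. apply (injective_preserves_support (conjZ a k b) (dom k)); auto.
      + apply F_inj, F_conjZ; auto.
      + intros s Hs. apply conj_b_support; auto.
    - intros t N. apply conj_b_out; auto. }
  assert (Hz : Gen (fun y => fext y d) (conjZ a (- k) (piece x k))).
  { apply centralizer_b. split; [|split].
    - apply F_conjZ; auto.
    - intros t Ht. replace 0%Z with (k + - k)%Z by lia. apply (conjZ_support k (- k) (piece x k)); auto.
      intros s Hs. apply NNPP. intros N. apply Hs. unfold piece. apply restr_out. auto.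
    - rewrite <- (conjZ_opp_l a Fa k b). apply (commute_conjZ a Fa). auto. }
  rewrite <- (conjZ_opp_r a Fa k (piece x k)).
  apply (Gen_conjZ a Fa k (fun y => fext y d)); auto.
  intros f Hf. exists k. intros t. unfold conjZ. rewrite Hf. reflexivity.
Qed.

Lemma commuting_is_pieces_product x : F x -> (forall k, commute x (conjZ a k b)) ->
  exists Ks, x = pieces_product x Ks.
Proof.
  intros Fx Hc. pose proof (commuting_fixes_alpha x Fx Hc) as Hfix.
  destruct (finitely_many_pieces x Fx Hfix) as [Ks0 Hid].
  set (Ks := nodup Z.eq_dec Ks0). exists Ks.
  apply functional_extensionality; intros t.
  destruct (classic (exists k, In k Ks /\ dom k t)) as [[k [Hk Ht]]|Nex].
  - symmetry. apply (pieces_product_in x Ks k t); auto.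
    + apply commuting_preserves_dom; auto.
    + apply NoDup_nodup.
  - rewrite pieces_product_out by (intros k Hk Ht; apply Nex; eauto).
    destruct (classic (0 < t < r)) as [It|Nt].
    + destruct (alpha_covering t It) as [k Hk].
      destruct (Req_dec t (alpha k)) as [->|NE]; [apply Hfix|].
      apply (Hid k); [|unfold dom; lra].
      intros Hk'. apply Nex. exists k. split; [apply nodup_In; auto|unfold dom; lra].
    + destruct (Req_dec t 0) as [->|N0]; [apply F_fix0; auto|].
      apply F_out; auto. unfold inI. lra.
Qed.

Lemma conj_d_commutes k j : commute (conjZ a k d) (conjZ a j b).
Proof.
  destruct d_in_centralizer as [Fd [supp_d Hdb]].
  destruct (Z.eq_dec j k) as [->|NE]; [apply commute_conjZ; auto|].
  apply (disjoint_supports_commute _ _ (dom k) (dom j)).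
  - apply F_inj, F_conjZ; auto.
  - apply F_inj, F_conjZ; auto.
  - intros t Ht. rewrite <- (Z.add_0_l k). apply (conjZ_support 0 k d); auto.
  - intros t Ht. apply conj_b_support; auto.
  - intros t H1 H2. apply (dom_disjoint k j t); auto.
Qed.

Theorem centralizer_of_conjugates x :
  (F x /\ forall k, commute x (conjZ a k b))
  <-> Gen (fun y => exists k : Z, fext y (conjZ a k d)) x.
Proof.
  split.
  - intros [Fx Hc]. destruct (commuting_is_pieces_product x Fx Hc) as [Ks ->].
    apply Gen_pieces_product. intros k _. apply piece_in_Gen; auto.
  - intros Hg. induction Hg as [f [k Hk]| |f g _ IH E|f g _ [Ff Cf] _ [Fg Cg]|f g _ [Ff Cf] E1 E2].
    + replace f with (conjZ a k d) by (apply functional_extensionality; intros t; symmetry; auto).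
      split; [apply F_conjZ, d_in_centralizer; auto|]. intros j. apply conj_d_commutes.
    + split; [apply F_id|]. intros k t. auto.
    + replace f with g by (apply functional_extensionality; intros t; symmetry; auto). auto.
    + split; [apply F_comp; auto|]. intros k t. rewrite Cf, Cg. auto.
    + split; [apply (F_inverse f); auto|].
      intros k t. apply (F_inj f Ff). rewrite E2, Cf, E2. auto.
Qed.

End Centralizer.
End Domains.
End FGroup.

Lemma inF_S_iff r Lambda A (S : R -> Prop) x :
  inF_S r Lambda A S x <-> inF r Lambda A x /\ (forall t, x t <> t -> S t).
Proof.
  split; intros [Fx HS]; split; auto.
  - intros t Ht. apply HS. split; auto.
    apply NNPP. intros N. apply Ht, (F_out r Lambda A); auto.
  - intros t [_ Ht]. auto.
Qed.

Theorem lemma4p6 (r : R) (Lambda A : R -> Prop)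
  (hr : 0 < r) (hLambda : mult_subgroup_pos Lambda) (hA : add_subgroup A)
  (hrA : A r) (hLA : forall l t, Lambda l -> A t -> A (l * t))
  (a b d : R -> R) (alpha0 : R)
  (ha : inFup r Lambda A a) (hsa : forall t, supp r a t <-> 0 < t < r)
  (halpha0 : 0 < alpha0 < r) (halpha0A : A alpha0)
  (hb : inFup r Lambda A b)
  (hsb : forall t, supp r b t <-> alpha0 < t < powZ a 1 alpha0)
  (hd : inF_S r Lambda A (fun t => alpha0 < t < powZ a 1 alpha0) d)
  (hcent : forall x,
     (inF_S r Lambda A (fun t => alpha0 < t < powZ a 1 alpha0) x /\ commute x b)
     <-> Gen (fun y => fext y d) x) :
  forall x,
    (inF r Lambda A x /\ forall k : Z, commute x (conjZ a k b))
    <-> Gen (fun y => exists k : Z, fext y (conjZ a k d)) x.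
Proof.
  destruct ha as [Fa a_ge]. destruct hb as [Fb _].
  assert (a_up : forall t, 0 < t < r -> t < a t).
  { intros t Ht. destruct (proj2 (hsa t) Ht) as [It Ne]. pose proof (a_ge t It). lra. }
  assert (supp_b : forall t, b t <> t <-> alpha0 < t < powZ a 1 alpha0).
  { intros t. rewrite <- hsb. split; [|intros [_ H]; auto].
    intros Ne. split; auto. apply NNPP. intros N. apply Ne, (F_out r Lambda A); auto. }
  apply (centralizer_of_conjugates r Lambda A hr hLambda hA hLA a alpha0 Fa halpha0 a_up
           b d Fb supp_b halpha0A).
  intros x. rewrite <- hcent, inF_S_iff. tauto.
Qed.
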